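(* Let $\alpha>0$, $t_0>0$, and define the set-valued map $G:[t_0,+\infty)\times\mathcal H\times\mathcal H\rightrightarrows\mathcal H\times\mathcal H$ by $$G(t,u,v)=\{v\}\times\Big(-\tfrac{\alpha}{t}v-\arg\min_{g\in C(u)}\langle g,-v\rangle\Big).$$ Then: (i) for all $(t,u,v)$, the set $G(t,u,v)$ is convex and compact; (ii) $G$ is upper semicontinuous; (iii) if $\dim\mathcal H<+\infty$, the map $\phi:[t_0,+\infty)\times\mathcal H\times\mathcal H\to\mathcal H\times\mathcal H$, $(t,u,v)\mapsto\operatorname{proj}_{G(t,u,v)}(0)$, is locally compact; (iv) if the gradients $\nabla f_i$ are globally $L$-Lipschitz continuous, then there exists $c>0$ such that for all $(t,u,v)\in[t_0,+\infty)\times\mathcal H\times\mathcal H$, $$\sup_{\xi\in G(t,u,v)}\|\xi\|_{\mathcal H\times\mathcal H}\le c\big(1+\|(u,v)\|_{\mathcal H\times\mathcal H}\big),$$ where $\|(x,y)\|_{\mathcal H\times\mathcal H}=\sqrt{\|x\|^2+\|y\|^2}$.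
   Context: $\mathcal H$ is a real Hilbert space. $f_1,\dots,f_m:\mathcal H\to\mathbb R$ are convex and continuously differentiable. $C(u)=\operatorname{co}\{\nabla f_i(u):i=1,\dots,m\}$. For a closed convex $K$, $\operatorname{proj}_K(y)=\arg\min_{w\in K}\|w-y\|^2$. A set-valued map $G:\mathcal X\rightrightarrows\mathcal Y$ is upper semicontinuous at $x_0$ if for every open $N\supset G(x_0)$ there is a neighborhood $M$ of $x_0$ with $G(M)\subset N$; it is upper semicontinuous if this holds at every point. A single-valued map $\phi:\mathcal X\to\mathcal Y$ is locally compact if every point has a neighborhood that is mapped into a compact subset of $\mathcal Y$. *)

From HB Require Import structures.
From mathcomp Require Import all_boot all_order all_algebra.
From mathcomp Require Import all_classical all_reals all_analysis.
Set Implicit Arguments.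
Unset Strict Implicit.
Unset Printing Implicit Defensive.
Import Order.TTheory GRing.Theory Num.Theory.
Import numFieldNormedType.Exports.
Local Open Scope classical_set_scope.
Local Open Scope ring_scope.

(* A real Hilbert space: a complete normed space over R (H : completeNormedModType R)
   whose norm comes from an inner product. *)
Record inner_product (R : realType) (H : normedModType R) := InnerProduct {
  ip :> H -> H -> R;
  ip_sym : forall x y, ip x y = ip y x;
  ip_linl : forall (a : R) x y z, ip (a *: x + y) z = a * ip x z + ip y z;
  ip_normE : forall x, ip x x = `|x| ^+ 2
}.

Definition conv_hull (R : realType) (V : lmodType R) (m : nat) (p : 'I_m -> V)
  : set V :=
  [set x | exists l : 'I_m -> R, (forall i, 0 <= l i) /\ \sum_(i < m) l i = 1 /\
           x = \sum_(i < m) l i *: p i].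

Definition Cset (R : realType) (H : normedModType R) (m : nat)
  (grad : 'I_m -> H -> H) (u : H) : set H :=
  conv_hull (fun i => grad i u).

Definition argmin_ip (R : realType) (H : normedModType R) (ipH : inner_product H)
  (K : set H) (w : H) : set H :=
  [set g | K g /\ forall g', K g' -> ipH g w <= ipH g' w].

Definition Gmap (R : realType) (H : normedModType R) (ipH : inner_product H)
  (m : nat) (grad : 'I_m -> H -> H) (alpha : R) (p : R * H * H) : set (H * H) :=
  let t := p.1.1 in let u := p.1.2 in let v := p.2 in
  [set xi | xi.1 = v /\
     exists g, argmin_ip ipH (Cset grad u) (- v) g /\
               xi.2 = - ((alpha / t) *: v) - g].

Definition pnorm (R : realType) (H : normedModType R) (x : H * H) : R :=
  Num.sqrt (`|x.1| ^+ 2 + `|x.2| ^+ 2).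

(* proj_K(y) = arg min_{w in K} ||w - y||^2 in H x H (Hilbert norm); the
   minimizer is unique for K nonempty closed convex; we pick it with xget
   (default (0,0), irrelevant when the minimizer exists). *)
Definition hproj (R : realType) (H : normedModType R) (K : set (H * H)) (y : H * H)
  : H * H :=
  xget (0, 0) [set w | K w /\ forall w', K w' ->
          pnorm (w - y) ^+ 2 <= pnorm (w' - y) ^+ 2].

Definition usc_on (X Y : topologicalType) (D : set X) (G : X -> set Y) :=
  forall x0, D x0 -> forall N : set Y, open N -> G x0 `<=` N ->
    exists M : set X, nbhs x0 M /\ forall x, M x -> D x -> G x `<=` N.

Definition locally_compact_on (X Y : topologicalType) (D : set X) (phi : X -> Y) :=
  forall x0, D x0 -> exists M : set X, nbhs x0 M /\
    exists K : set Y, compact K /\ forall x, M x -> D x -> K (phi x).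

Definition finite_dim (R : realType) (V : lmodType R) :=
  exists (n : nat) (e : 'I_n -> V), forall x, exists c : 'I_n -> R,
    x = \sum_(i < n) c i *: e i.

From HB Require Import structures.
From mathcomp Require Import all_boot all_order all_algebra.
From mathcomp Require Import all_classical all_reals all_analysis.
From mathcomp Require Import ring lra.
Import Order.TTheory GRing.Theory Num.Theory.
Import numFieldNormedType.Exports.
Local Open Scope classical_set_scope.
Local Open Scope ring_scope.
Set Implicit Arguments.
Unset Strict Implicit.
Unset Printing Implicit Defensive.

(* The minimizers of g |-> <g, -v> over co{grad f_i(u)} are exactly the convex
   combinations of the grad f_i(u) whose weights vanish off the set of indices
   attaining min_i <grad f_i(u), -v>.  Hence G(t,u,v) is the image of a compact
   convex face of the unit simplex under a map that is affine in the weights and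
   jointly continuous in (weights, t, u, v) for t <> 0: this gives (i).  The set
   of minimizing indices can only shrink near a point, so near (t,u,v) all values
   of G lie in the image of one fixed face, and the tube lemma gives (ii).  Every
   element of G(t,u,v) has norm at most |v| + (alpha/t0)|v| + sum_i |grad f_i(u)|,
   which gives (iv) under Lipschitz gradients and, since bounded sets are
   relatively compact in finite dimension, (iii). *)

Section InnerProduct.
Variables (R : realType) (V : normedModType R) (ip : inner_product V).

Lemma ipDl x y z : ip (x + y) z = ip x z + ip y z.
Proof. by have := ip_linl ip 1 x y z; rewrite scale1r mul1r. Qed.

Lemma ip0l z : ip 0 z = 0.
Proof. by have := ip_linl ip (-1) 0 0 z; rewrite scaler0 addr0 mulN1r addNr. Qed.

Lemma ipZl a x z : ip (a *: x) z = a * ip x z.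
Proof. by have := ip_linl ip a x 0 z; rewrite addr0 ip0l addr0. Qed.

Lemma ipNl x z : ip (- x) z = - ip x z.
Proof. by rewrite -scaleN1r ipZl mulN1r. Qed.

Lemma ipDr x y z : ip z (x + y) = ip z x + ip z y.
Proof. by rewrite ip_sym ipDl !(ip_sym ip z). Qed.

Lemma ipZr a x z : ip z (a *: x) = a * ip z x.
Proof. by rewrite ip_sym ipZl (ip_sym ip z). Qed.

Lemma ipNr x z : ip z (- x) = - ip z x.
Proof. by rewrite ip_sym ipNl (ip_sym ip z). Qed.

Lemma ip0r z : ip z 0 = 0.
Proof. by rewrite ip_sym ip0l. Qed.

Lemma ip_suml (I : finType) (l : I -> R) (p : I -> V) w :
  ip (\sum_i l i *: p i) w = \sum_i l i * ip (p i) w.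
Proof.
rewrite (big_morph (ip^~ w) (fun x y => ipDl x y w) (ip0l w)).
by apply: eq_bigr => i _; rewrite ipZl.
Qed.

Lemma ip_polar x y : ip x y = (`|x + y| ^+ 2 - `|x - y| ^+ 2) / 4.
Proof.
rewrite -!(ip_normE ip) !ipDl !ipDr !ipNl !ipNr (ip_sym ip y x).
by field.
Qed.

Lemma cauchy_schwarz x y : `|ip x y| <= `|x| * `|y|.
Proof.
have [->|y_neq0] := eqVneq y 0; first by rewrite ip0r !normr0 mulr0.
have y_gt0 : 0 < `|y| by rewrite normr_gt0.
have quad s : 0 <= `|x| ^+ 2 + 2 * s * ip x y + s ^+ 2 * `|y| ^+ 2.
  have -> : `|x| ^+ 2 + 2 * s * ip x y + s ^+ 2 * `|y| ^+ 2 =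
      ip (x + s *: y) (x + s *: y).
    by rewrite ipDl !ipDr !ipZl !ipZr (ip_sym ip y x) -!(ip_normE ip); ring.
  by rewrite ip_normE sqr_ge0.
have := quad (- ip x y / `|y| ^+ 2).
have -> : `|x| ^+ 2 + 2 * (- ip x y / `|y| ^+ 2) * ip x y +
    (- ip x y / `|y| ^+ 2) ^+ 2 * `|y| ^+ 2 = `|x| ^+ 2 - ip x y ^+ 2 / `|y| ^+ 2.
  by field; rewrite gt_eqF.
rewrite subr_ge0 ler_pdivrMr ?exprn_gt0 // -exprMn -real_normK ?num_real //.
by rewrite ler_pXn2r ?nnegrE ?mulr_ge0.
Qed.

Lemma ip_continuous : continuous (fun p : V * V => ip p.1 p.2).
Proof.
have -> : (fun p : V * V => ip p.1 p.2) =
    (fun p => (`|p.1 + p.2| * `|p.1 + p.2| - `|p.1 - p.2| * `|p.1 - p.2|) / 4).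
  by apply: funext => p; rewrite ip_polar !expr2.
move=> p; apply: cvgMr_tmp.
have cvg_norm_add : `|q.1 + q.2| @[q --> p] --> `|p.1 + p.2|.
  by apply: cvg_norm; apply: cvgD; [exact: cvg_fst | exact: cvg_snd].
have cvg_norm_sub : `|q.1 - q.2| @[q --> p] --> `|p.1 - p.2|.
  by apply: cvg_norm; apply: cvgB; [exact: cvg_fst | exact: cvg_snd].
by apply: cvgB; apply: cvgM.
Qed.

End InnerProduct.

Lemma cvg_sum (R : realType) (V : normedModType R) (T : Type) (F : set_system T)
    {FF : Filter F} (I : finType) (f : I -> T -> V) (a : I -> V) :
  (forall i, f i x @[x --> F] --> a i) -> \sum_i f i x @[x --> F] --> \sum_i a i.
Proof. by move=> fa; apply: (cvg_big add_continuous) => // i _; exact: fa. Qed.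

Lemma near_image_compact_sub (X P Y : topologicalType) (K : set P)
    (Phi : X -> P -> Y) (x0 : X) (N : set Y) :
  compact K -> (forall k, K k -> (fun q : P * X => Phi q.2 q.1) @ (k, x0) --> Phi x0 k) ->
  open N -> Phi x0 @` K `<=` N -> \forall x \near x0, Phi x @` K `<=` N.
Proof.
move=> cK Phi_cont oN KN.
have : \forall x \near x0, K `<=` (fun k => N (Phi x k)).
  apply: (compact_near_coveringP K).1 => // k Kk; apply: Phi_cont => //.
  by apply: open_nbhs_nbhs; split => //; apply: KN; exists k.
by apply: filterS => x sub _ [k Kk <-]; exact: sub.
Qed.

Section ConvexImage.
Local Open Scope convex_scope.

Lemma convex_set_image (R : realType) (U W : lmodType R)
    (f : convex_lmodType U -> convex_lmodType W) (A : set (convex_lmodType U)) :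
  (forall x y (k : {i01 R}), f (x <| k |> y) = f x <| k |> f y) ->
  convex_set A -> convex_set (f @` A).
Proof.
move=> f_conv cA u v k; rewrite !inE => -[x Ax <-] [y Ay <-].
rewrite -f_conv; exists (x <| k |> y) => //.
by rewrite -inE; apply: cA; rewrite inE.
Qed.

End ConvexImage.

Section Weights.
Variables (R : realType) (m : nat).

Definition argmin_index (a : 'I_m -> R) : set 'I_m := [set i | forall j, a i <= a j].

(* The redundant bound [l i <= 1] exhibits the set as a product of compact
   intervals cut by a closed hyperplane. *)
Definition weights_on (A : set 'I_m) : set 'rV[R]_m :=
  [set l : 'rV[R]_m | forall i, 0 <= l ord0 i <= 1 /\ (~ A i -> l ord0 i = 0)] `&`
  [set l : 'rV[R]_m | \sum_i l ord0 i = 1].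

Lemma weight_le1 (l : 'I_m -> R) : (forall i, 0 <= l i) -> \sum_i l i = 1 ->
  forall i, l i <= 1.
Proof. by move=> l0 l1 i; rewrite -l1 (bigD1 i) //= lerDl sumr_ge0. Qed.

Lemma weights_onS (A B : set 'I_m) : A `<=` B -> weights_on A `<=` weights_on B.
Proof.
move=> AB l [hl l1]; split=> // i; have [hli hA] := hl i.
by split=> // /(contra_not (@AB i)).
Qed.

Lemma weights_on_compact (A : set 'I_m) : compact (weights_on A).
Proof.
apply: compact_closedI.
  apply: (@rV_compact R m (fun i r => 0 <= r <= 1 /\ (~ A i -> r = 0))) => i.
  have [Ai|nAi] := pselect (A i).
    rewrite (_ : (fun r => _) = `[0, 1]%classic); first exact: segment_compact.
    apply/seteqP; split => r /=; rewrite in_itv /=; first by case.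
    by move=> h; split.
  rewrite (_ : (fun r => _) = [set 0]); first exact: compact_set1.
  apply/seteqP; split => r /=; first by case=> _ /(_ nAi).
  by move=> ->; rewrite lexx ler01.
apply: (@preimage_closed _ _ (fun l : 'rV[R]_m => \sum_i l ord0 i) [set r | r = 1]);
  last exact: closed_eq.
by move=> l _; apply: (cvg_sum (F := nbhs l)) => i; exact: coord_continuous.
Qed.

Lemma near_argmin_index_sub (X : topologicalType) (a : X -> 'I_m -> R) (x0 : X) :
  (forall i, {for x0, continuous (a ^~ i)}) ->
  \forall x \near x0, argmin_index (a x) `<=` argmin_index (a x0).
Proof.
move=> a_cont.
have : \forall x \near x0, forall i j, a x0 j < a x0 i -> a x j < a x i.
  apply: filter_forall => i; apply: filter_forall => j.
  have [ji|_] := ltP (a x0 j) (a x0 i); last by apply: filterE.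
  have : a x i - a x j @[x --> x0] --> a x0 i - a x0 j.
    by apply: cvgB; exact: a_cont.
  move=> /cvgr_gt /(_ 0); rewrite subr_gt0 => /(_ ji).
  by apply: filterS => x; rewrite subr_gt0.
apply: filterS => x strict i xi j; rewrite leNgt; apply/negP => /strict.
by rewrite ltNge xi.
Qed.

Local Open Scope convex_scope.

Lemma weights_on_convex (A : set 'I_m) : convex_set (weights_on A).
Proof.
move=> l1 l2 k; rewrite !inE => -[/= h1 s1] [/= h2 s2].
have c0 : 0 <= k%:num by []; have c1 : k%:num <= 1 by [].
rewrite /conv /= /unstable.onem; set c := k%:num in c0 c1 *.
split=> [i|] /=.
  rewrite !mxE; have [/andP[a0 a1] a00] := h1 i; have [/andP[b0 b1] b00] := h2 i.
  split; first by apply/andP; split; nra.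
  by move=> nA; rewrite a00 // b00 // !mulr0 addr0.
under eq_bigr do rewrite !mxE.
by rewrite big_split /= -!mulr_sumr s1 s2 !mulr1 addrC subrK.
Qed.

End Weights.

Section ConvexHull.
Variables (R : realType) (V : normedModType R) (ip : inner_product V) (m : nat).
Implicit Type p : 'I_m -> V.

Definition combination p (l : 'rV[R]_m) : V := \sum_i l ord0 i *: p i.

Lemma conv_hull_vertex p j : conv_hull p (p j).
Proof.
exists (fun i => (i == j)%:R); split=> [i|]; first by rewrite ler0n.
by split; rewrite (bigD1 j) //= eqxx ?scale1r big1 ?addr0 // => i /negbTE ->;
  rewrite ?scale0r.
Qed.

Lemma conv_hull_norm_le p g : conv_hull p g -> `|g| <= \sum_i `|p i|.
Proof.
move=> [l [l0 [l1 ->]]]; apply: le_trans (ler_norm_sum _ _ _) _.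
apply: ler_sum => i _; rewrite normrZ ger0_norm // ler_piMl //.
exact: weight_le1.
Qed.

Lemma argmin_conv_hullE p w : argmin_ip ip (conv_hull p) w =
  combination p @` weights_on (argmin_index (fun i => ip (p i) w)).
Proof.
set a := fun i => ip (p i) w.
apply/seteqP; split.
- move=> g [[l [l0 [l1 gE]]] gmin].
  have le_vertex j : ip g w <= a j by apply: gmin; exact: conv_hull_vertex.
  have active i : 0 < l i -> argmin_index a i.
    move=> li j; apply: le_trans (le_vertex j); rewrite le_eqVlt; apply/orP; left.
    have terms_ge0 k : 0 <= l k * (a k - ip g w) by rewrite mulr_ge0 ?subr_ge0.
    have : \sum_k l k * (a k - ip g w) = 0.
      under eq_bigr do rewrite mulrBr.
      by rewrite sumrB -mulr_suml l1 mul1r gE ip_suml subrr.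
    move/psumr_eq0P => /(_ (fun k _ => terms_ge0 k) i isT) /eqP.
    by rewrite mulf_eq0 gt_eqF //= subr_eq0.
  exists (\row_i l i).
    split=> [i|] /=; last by under eq_bigr do rewrite mxE.
    rewrite mxE l0 weight_le1 //; split=> // nai.
    by apply: contra_notP nai => /eqP li; apply: active; rewrite lt_neqAle eq_sym li l0.
  by rewrite gE /combination; apply: eq_bigr => i _; rewrite mxE.
- move=> _ [l [hl l1] <-]; split.
    by exists (fun i => l ord0 i); split=> // i; have [/andP[]] := hl i.
  have le_vertex j : ip (combination p l) w <= a j.
    rewrite /combination ip_suml -[a j]mul1r -l1 mulr_suml; apply: ler_sum => i _.
    have [/andP[li0 _] hA] := hl i.
    have [Ai|nAi] := pselect (argmin_index a i); first exact: ler_wpM2l.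
    by rewrite hA // !mul0r.
  move=> _ [l' [l'0 [l'1 ->]]].
  rewrite [X in _ <= X]ip_suml -[ip (combination p l) w]mul1r -l'1 mulr_suml.
  by apply: ler_sum => j _; apply: ler_wpM2l; [exact: l'0 | exact: le_vertex].
Qed.

Lemma combination_continuous p : continuous (combination p).
Proof.
move=> l; apply: (cvg_sum (F := nbhs l)) => i.
by apply: cvgZ; [exact: coord_continuous | exact: cvg_cst].
Qed.

End ConvexHull.

Section FiniteDimension.
Variables (R : realType) (V : normedModType R) (ip : inner_product V).
Variables (n : nat) (e : 'I_n -> V).
Hypothesis e_span : forall x, exists c : 'I_n -> R, x = \sum_i c i *: e i.

Definition gram : 'M[R]_n := \matrix_(i, j) ip (e i) (e j).

Definition ip_row (x : V) : 'rV[R]_n := \row_i ip x (e i).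

Lemma ip_row_combination c : ip_row (combination e c) = c *m gram.
Proof.
by apply/rowP => j; rewrite !mxE ip_suml; apply: eq_bigr => i _; rewrite !mxE.
Qed.

Lemma combination_surj x : exists c, x = combination e c.
Proof.
have [c0 ->] := e_span x; exists (\row_i c0 i).
by apply: eq_bigr => i _; rewrite mxE.
Qed.

(* [ip_row x] lies in the row space of the Gram matrix, and a vector of the span
   orthogonal to every [e i] is zero. *)
Lemma combination_ip_row x : x = combination e (ip_row x *m pinvmx gram).
Proof.
set d := ip_row x *m pinvmx gram.
have [c xE] := combination_surj x.
have d_row : ip_row (combination e d) = ip_row x.
  by rewrite ip_row_combination mulmxKpV // xE ip_row_combination submxMl.
have z_orth i : ip (combination e d - x) (e i) = 0.
  have := congr1 (fun r : 'rV[R]_n => r ord0 i) d_row; rewrite !mxE => eq_i.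
  by rewrite ipDl ipNl eq_i subrr.
have z_comb : combination e d - x = combination e (d - c).
  by rewrite xE /combination -sumrB; apply: eq_bigr => i _; rewrite !mxE scalerBl.
apply/eqP; rewrite eq_sym -subr_eq0 -normr_eq0 -sqrf_eq0 -(ip_normE ip).
rewrite {1}z_comb /combination ip_suml big1 // => i _.
by rewrite ip_sym z_orth mulr0.
Qed.

End FiniteDimension.

Lemma finite_dim_ball_compact (R : realType) (V : normedModType R)
    (ip : inner_product V) (r : R) :
  finite_dim V -> exists K : set V, compact K /\ forall x, `|x| <= r -> K x.
Proof.
move=> [n [e e_span]].
pose P := pinvmx (gram ip e).
pose C j := \sum_i `|e i| * `|P i j|.
pose box j := `[- (r * C j), r * C j]%classic.
exists (combination e @` [set c : 'rV[R]_n | forall j, box j (c ord0 j)]); split.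
  apply: continuous_compact.
    exact/continuous_subspaceT/combination_continuous.
  by apply: (@rV_compact R n box) => j; exact: segment_compact.
move=> x xr; exists (ip_row ip e x *m P); last exact/esym/combination_ip_row.
move=> j; rewrite /box /= in_itv /= -ler_norml mxE.
apply: le_trans (ler_norm_sum _ _ _) _; rewrite /C mulr_sumr; apply: ler_sum => i _.
rewrite mxE normrM mulrA ler_wpM2r //.
by apply: le_trans (cauchy_schwarz ip x (e i)) _; rewrite ler_wpM2r.
Qed.

Section ProductNorm.
Variables (R : realType) (H : normedModType R).
Implicit Type x : H * H.

Lemma pnorm_le_add x : pnorm x <= `|x.1| + `|x.2|.
Proof.
rewrite /pnorm -[leRHS]ger0_norm ?addr_ge0 // -sqrtr_sqr.
apply: ler_wsqrtr; have := normr_ge0 x.1; have := normr_ge0 x.2; nra.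
Qed.

Lemma normr_fst_le_pnorm x : `|x.1| <= pnorm x.
Proof. by rewrite /pnorm -[leLHS]normr_id -sqrtr_sqr ler_wsqrtr // lerDl sqr_ge0. Qed.

Lemma normr_snd_le_pnorm x : `|x.2| <= pnorm x.
Proof. by rewrite /pnorm -[leLHS]normr_id -sqrtr_sqr ler_wsqrtr // lerDr sqr_ge0. Qed.

Lemma hproj_cases (K : set (H * H)) y : hproj K y = (0, 0) \/ K (hproj K y).
Proof. by rewrite /hproj; case: xgetP => [w -> [Kw _]|_]; [right|left]. Qed.

End ProductNorm.

Section Gmap.
Variables (R : realType) (H : normedModType R) (ip : inner_product H).
Variables (m : nat) (grad : 'I_m -> H -> H) (alpha : R).
Hypothesis grad_cont : forall i, continuous (grad i).

Local Notation G := (Gmap ip grad alpha).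

Definition Gmap_param (x : R * H * H) (l : 'rV[R]_m) : H * H :=
  (x.2, - ((alpha / x.1.1) *: x.2) - combination (grad ^~ x.1.2) l).

Definition Gmap_score (x : R * H * H) (i : 'I_m) : R := ip (grad i x.1.2) (- x.2).

Lemma GmapE x : G x = Gmap_param x @` weights_on (argmin_index (Gmap_score x)).
Proof.
apply/seteqP; split.
  move=> [a b] [/= -> [g [+ ->]]].
  by rewrite /Cset argmin_conv_hullE => -[l Wl <-]; exists l.
move=> _ [l Wl <-]; split=> //; exists (combination (grad ^~ x.1.2) l); split=> //.
by rewrite /Cset argmin_conv_hullE; exists l.
Qed.

Local Open Scope convex_scope.

Lemma Gmap_convex x : convex_set (G x).
Proof.
rewrite GmapE; apply: convex_set_image; last exact: weights_on_convex.
move=> l1 l2 k; rewrite /conv /= /unstable.onem /Gmap_param; set c := k%:num.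
have comb_conv : combination (grad ^~ x.1.2) (c *: l1 + (1 - c) *: l2) =
    c *: combination (grad ^~ x.1.2) l1 + (1 - c) *: combination (grad ^~ x.1.2) l2.
  rewrite /combination !scaler_sumr -big_split /=; apply: eq_bigr => i _.
  by rewrite !mxE !scalerA -scalerDl.
have split_c (y : H) : y = c *: y + (1 - c) *: y by rewrite -scalerDl addrC subrK scale1r.
have affine (y a1 a2 : H) :
    - y - (c *: a1 + (1 - c) *: a2) = c *: (- y - a1) + (1 - c) *: (- y - a2).
  by rewrite !scalerBr !scalerN [in LHS](split_c y) !opprD addrACA.
by congr (_, _); [exact: split_c | rewrite comb_conv; exact: affine].
Qed.

Local Close Scope convex_scope.

Lemma Gmap_compact x : compact (G x).
Proof.
rewrite GmapE; apply: continuous_compact; last exact: weights_on_compact.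
apply: continuous_subspaceT => l; apply: (cvg_pair (F := nbhs l)); first exact: cvg_cst.
by apply: cvgB; [exact: cvg_cst | exact: combination_continuous].
Qed.

Lemma grad_u_continuous i : continuous (fun x : R * H * H => grad i x.1.2).
Proof.
move=> x; apply: (cvg_comp (fun y : R * H * H => y.1.2) (grad i) _ (@grad_cont i x.1.2)).
by apply: cvg_comp; [exact: cvg_fst | exact: cvg_snd].
Qed.

Lemma Gmap_param_continuous x l : x.1.1 != 0 ->
  (fun q : 'rV[R]_m * (R * H * H) => Gmap_param q.2 q.1) @ (l, x) --> Gmap_param x l.
Proof.
move=> x_neq0.
have cvg_l : (fun q : 'rV[R]_m * (R * H * H) => q.1) @ (l, x) --> l by exact: cvg_fst.
have cvg_x : (fun q : 'rV[R]_m * (R * H * H) => q.2) @ (l, x) --> x by exact: cvg_snd.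
have cvg_t : (fun y : R * H * H => y.1.1) @ x --> x.1.1.
  by apply: cvg_comp; exact: cvg_fst.
have cvg_v : (fun y : R * H * H => y.2) @ x --> x.2 by exact: cvg_snd.
apply: cvg_pair; first exact: (cvg_comp _ _ cvg_x cvg_v).
apply: cvgB.
  apply: cvgN; apply: cvgZ; last exact: (cvg_comp _ _ cvg_x cvg_v).
  by apply: cvgM; [exact: cvg_cst | apply: cvgV => //; exact: (cvg_comp _ _ cvg_x cvg_t)].
apply: (cvg_sum (F := nbhs (l, x))) => i; apply: cvgZ.
  exact: (cvg_comp _ _ cvg_l (@coord_continuous _ 1 m ord0 i l)).
exact: (cvg_comp _ _ cvg_x (@grad_u_continuous i x)).
Qed.

Lemma Gmap_score_continuous i : continuous (Gmap_score ^~ i).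
Proof.
move=> x; apply: (cvg_comp (fun y : R * H * H => (grad i y.1.2, - y.2))
  (fun p : H * H => ip p.1 p.2) _
  (@ip_continuous _ _ ip (grad i x.1.2, - x.2))).
apply: (cvg_pair (F := nbhs x)); first exact: grad_u_continuous.
by apply: cvgN; exact: cvg_snd.
Qed.

Lemma Gmap_usc (t0 : R) : 0 < t0 -> usc_on [set x : R * H * H | t0 <= x.1.1] G.
Proof.
move=> t0_gt0 x0 Dx0 N oN GN.
have x0_neq0 : x0.1.1 != 0 by rewrite gt_eqF // (lt_le_trans t0_gt0 Dx0).
pose W : set 'rV[R]_m := weights_on (argmin_index (Gmap_score x0)).
have near_param : \forall x \near x0, G x `<=` Gmap_param x @` W.
  have := near_argmin_index_sub (fun i => @Gmap_score_continuous i x0).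
  apply: filterS => x sub.
  by rewrite GmapE => _ [l Wl <-]; exists l => //; exact: weights_onS Wl.
have near_N : \forall x \near x0, Gmap_param x @` W `<=` N.
  apply: near_image_compact_sub => //; first exact: weights_on_compact.
    by move=> l _; exact: Gmap_param_continuous.
  by rewrite -GmapE.
exists [set x | G x `<=` N]; split=> [|x GxN _ //].
by apply: filterS2 near_param near_N => x GW WN; exact: subset_trans WN.
Qed.

Lemma Gmap_norm_le (t0 : R) x xi : 0 < t0 -> 0 <= alpha -> t0 <= x.1.1 -> G x xi ->
  xi.1 = x.2 /\ `|xi.2| <= alpha / t0 * `|x.2| + \sum_i `|grad i x.1.2|.
Proof.
move=> t0_gt0 alpha_ge0 t0x [-> [g [gmin ->]]]; split=> //.
have t_gt0 : 0 < x.1.1 := lt_le_trans t0_gt0 t0x.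
apply: le_trans (ler_normB _ _) _; apply: lerD; last exact: conv_hull_norm_le gmin.1.
rewrite normrN normrZ ger0_norm; last by rewrite divr_ge0 // ltW.
by rewrite ler_wpM2r // ler_wpM2l // lef_pV2 ?posrE.
Qed.

Lemma Gmap_linear_growth (t0 L : R) : 0 < t0 -> 0 <= alpha -> 0 <= L ->
    (forall i u u', `|grad i u - grad i u'| <= L * `|u - u'|) ->
  exists c, 0 < c /\ forall x, t0 <= x.1.1 -> forall xi, G x xi ->
    pnorm xi <= c * (1 + pnorm (x.1.2, x.2)).
Proof.
move=> t0_gt0 alpha_ge0 L_ge0 lip.
pose S0 := \sum_i `|grad i 0|; pose A := alpha / t0.
have S0_ge0 : 0 <= S0 by apply: sumr_ge0 => i _.
have A_ge0 : 0 <= A by rewrite divr_ge0 // ltW.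
have mL_ge0 : 0 <= m%:R * L by rewrite mulr_ge0.
have grad_le u : \sum_i `|grad i u| <= S0 + m%:R * L * `|u|.
  have -> : m%:R * L * `|u| = \sum_(i < m) L * `|u|.
    by rewrite sumr_const card_ord -mulrA mulr_natl.
  rewrite -big_split /=; apply: ler_sum => i _.
  have := lip i u 0; have := ler_normD (grad i u - grad i 0) (grad i 0).
  by rewrite subrK subr0; lra.
exists (1 + A + S0 + m%:R * L); split; first lra.
move=> x t0x xi Gxi; have [xi1 xi2] := Gmap_norm_le t0_gt0 alpha_ge0 t0x Gxi.
have := pnorm_le_add xi; rewrite xi1.
have := normr_fst_le_pnorm (x.1.2, x.2); have := normr_snd_le_pnorm (x.1.2, x.2).
have := grad_le x.1.2; have := normr_ge0 x.1.2; have := normr_ge0 x.2.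
by rewrite -/A /= in xi2 *; nra.
Qed.

Lemma Gmap_hproj_locally_compact (t0 : R) : 0 < t0 -> 0 <= alpha -> finite_dim H ->
  locally_compact_on [set x : R * H * H | t0 <= x.1.1] (fun x => hproj (G x) (0, 0)).
Proof.
move=> t0_gt0 alpha_ge0 fdH x0 _.
pose sg (x : R * H * H) := \sum_i `|grad i x.1.2|; pose A := alpha / t0.
have A_ge0 : 0 <= A by rewrite divr_ge0 // ltW.
have sg_ge0 x : 0 <= sg x by apply: sumr_ge0 => i _.
pose r := `|x0.2| + 1 + (A * (`|x0.2| + 1) + (sg x0 + 1)).
have [K [cK Kball]] := finite_dim_ball_compact ip r fdH.
have near_v : \forall x \near x0, `|x.2| < `|x0.2| + 1.
  by apply: (cvgr_norm_lt (F := nbhs x0) x0.2 cvg_snd); rewrite ltrDl.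
have near_sg : \forall x \near x0, sg x < sg x0 + 1.
  apply: (cvgr_lt (F := nbhs x0) (sg x0)); last by rewrite ltrDl.
  apply: (cvg_sum (F := nbhs x0)) => i; apply: cvg_norm.
  exact: grad_u_continuous.
exists [set x | `|x.2| < `|x0.2| + 1 /\ sg x < sg x0 + 1]; split; first exact: filterI.
exists (K `*` K); split; first exact: compact_setX.
move=> x [xv xsg] t0x.
have := normr_ge0 x0.2; have := normr_ge0 x.2; have := sg_ge0 x0.
have [->|Gxi] := hproj_cases (G x) (0, 0).
  by split; apply: Kball; rewrite normr0 /r; nra.
have [xi1 xi2] := Gmap_norm_le t0_gt0 alpha_ge0 t0x Gxi.
rewrite -/A -/(sg x) in xi2.
by split; apply: Kball; rewrite ?xi1 /r; nra.
Qed.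

End Gmap.

Theorem proposition3p1 (R : realType) (H : completeNormedModType R)
  (ipH : inner_product H) (m : nat) (hm : (0 < m)%N)
  (f : 'I_m -> H -> R) (grad : 'I_m -> H -> H)
  (f_convex : forall i, convex_function setT (f i))
  (f_diff : forall i u, differentiable (f i) u)
  (f_grad : forall i u h, 'd (f i) u h = ipH (grad i u) h)
  (grad_cont : forall i, continuous (grad i))
  (alpha t0 : R) (halpha : 0 < alpha) (ht0 : 0 < t0) :
  let D := [set p : R * H * H | t0 <= p.1.1] in
  let G := Gmap ipH grad alpha in
  (* (i) *)
  (forall p, D p -> convex_set (G p) /\ compact (G p)) /\
  (* (ii) *)
  usc_on D G /\
  (* (iii) *)
  (finite_dim H -> locally_compact_on D (fun p => hproj (G p) (0, 0))) /\
  (* (iv) *)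
  (forall L : R, 0 <= L ->
     (forall i x y, `|grad i x - grad i y| <= L * `|x - y|) ->
     exists c : R, 0 < c /\ forall p, D p -> forall xi, G p xi ->
       pnorm xi <= c * (1 + pnorm (p.1.2, p.2))).
Proof.
move=> D G; rewrite {}/D {}/G; split.
  by move=> p _; split; [exact: Gmap_convex | exact: Gmap_compact].
split; first exact: (Gmap_usc (ip := ipH) grad_cont ht0).
split; first exact: (Gmap_hproj_locally_compact ipH grad_cont ht0 (ltW halpha)).
by move=> L L_ge0 lip; exact: Gmap_linear_growth ht0 (ltW halpha) L_ge0 lip.
Qed.
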